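(* Under the setup in the context (no assumption that $\hat\beta_{ols}\neq\hat\beta_{2sls}$), one has $\hat\sigma_{2sls}^2\ge\hat\sigma_{ols}^2\ge\hat\sigma_u^2$ and $t_{CF}\ge t_{H_1}\ge t_{H_2}\ge t_{H_3}$.
   Context: Data: $Y_1$ is an $n\times k_1$ matrix, $Y_2$ an $n\times 1$ vector, $Z_1$ an $n\times p_1$ matrix, $Z_2$ an $n\times p_2$ matrix, all real; $Z\equiv(Z_1,Z_2)$ and $X\equiv(Y_1,Z_1)$. For a matrix $A$ with $A^\top A$ nonsingular, $P_A\equiv A(A^\top A)^{-1}A^\top$ and $M_A\equiv I_n-P_A$. Standing assumptions: $Z^\top Z$, $X^\top X$, $X^\top P_Z X$ and $(X,\hat V)^\top(X,\hat V)$ are nonsingular, where $\hat V\equiv M_Z Y_1$. Define $\hat Y_1\equiv P_Z Y_1$, $\hat\theta_{ols}\equiv(X^\top X)^{-1}X^\top Y_2$, $\hat\theta_{2sls}\equiv(X^\top P_ZX)^{-1}X^\top P_Z Y_2$, and let $\hat\beta_{ols},\hat\beta_{2sls}$ be the leading $k_1\times1$ subvectors of $\hat\theta_{ols},\hat\theta_{2sls}$. Define $(\hat\theta_{cf}^\top,\hat\rho_{cf}^\top)^\top\equiv((X,\hat V)^\top(X,\hat V))^{-1}(X,\hat V)^\top Y_2$, $\hat\sigma_u^2\equiv n^{-1}\|Y_2-X\hat\theta_{cf}-\hat V\hat\rho_{cf}\|^2$, $\hat\sigma_{ols}^2\equiv n^{-1}\|Y_2-X\hat\theta_{ols}\|^2$,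 $\hat\sigma_{2sls}^2\equiv n^{-1}\|Y_2-X\hat\theta_{2sls}\|^2$; these three are assumed strictly positive. For scalars $s_1^2,s_2^2>0$ with $s_1^2(\hat Y_1^\top M_{Z_1}\hat Y_1)^{-1}-s_2^2(Y_1^\top M_{Z_1}Y_1)^{-1}$ nonsingular, $t_{H,n}(s_1^2,s_2^2)\equiv(\hat\beta_{ols}-\hat\beta_{2sls})^\top\big(s_1^2(\hat Y_1^\top M_{Z_1}\hat Y_1)^{-1}-s_2^2(Y_1^\top M_{Z_1}Y_1)^{-1}\big)^{-1}(\hat\beta_{ols}-\hat\beta_{2sls})$. Define $t_{H_1}\equiv t_{H,n}(\hat\sigma_{ols}^2,\hat\sigma_{ols}^2)$, $t_{H_2}\equiv t_{H,n}(\hat\sigma_{2sls}^2,\hat\sigma_{2sls}^2)$, $t_{H_3}\equiv t_{H,n}(\hat\sigma_{2sls}^2,\hat\sigma_{ols}^2)$, and the Wald statistic $t_{CF}\equiv\hat\rho_{cf}^\top\big(\hat\sigma_u^2(\hat V^\top M_X\hat V)^{-1}\big)^{-1}\hat\rho_{cf}$. *)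

From HB Require Import structures.
From mathcomp Require Import all_boot all_order all_algebra.
Set Implicit Arguments. Unset Strict Implicit. Unset Printing Implicit Defensive.
Import Order.TTheory GRing.Theory Num.Theory.
Local Open Scope ring_scope.

Section Defs.
Variable R : realFieldType.

Definition projmx n m (A : 'M[R]_(n, m)) : 'M[R]_n :=
  A *m invmx (A^T *m A) *m A^T.
Definition annmx n m (A : 'M[R]_(n, m)) : 'M[R]_n := 1%:M - projmx A.

Definition gram_unit n m (A : 'M[R]_(n, m)) : bool := (A^T *m A) \in unitmx.

Definition sqnorm n (v : 'cV[R]_n) : R := (v^T *m v) 0 0.

Definition qform k (v : 'cV[R]_k) (A : 'M[R]_k) : R := (v^T *m A *m v) 0 0.

Variables (n k1 p1 p2 : nat).
Variables (Y1 : 'M[R]_(n, k1)) (Y2 : 'cV[R]_n)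
          (Z1 : 'M[R]_(n, p1)) (Z2 : 'M[R]_(n, p2)).

Definition Zmat : 'M[R]_(n, p1 + p2) := row_mx Z1 Z2.
Definition Xmat : 'M[R]_(n, k1 + p1) := row_mx Y1 Z1.
Definition Vhat : 'M[R]_(n, k1) := annmx Zmat *m Y1.
Definition Y1hat : 'M[R]_(n, k1) := projmx Zmat *m Y1.
Definition XV : 'M[R]_(n, (k1 + p1) + k1) := row_mx Xmat Vhat.

Definition theta_ols : 'cV[R]_(k1 + p1) :=
  invmx (Xmat^T *m Xmat) *m Xmat^T *m Y2.
Definition theta_2sls : 'cV[R]_(k1 + p1) :=
  invmx (Xmat^T *m projmx Zmat *m Xmat) *m Xmat^T *m projmx Zmat *m Y2.
Definition beta_ols : 'cV[R]_k1 := usubmx theta_ols.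
Definition beta_2sls : 'cV[R]_k1 := usubmx theta_2sls.

Definition coef_cf : 'cV[R]_((k1 + p1) + k1) := invmx (XV^T *m XV) *m XV^T *m Y2.
Definition theta_cf : 'cV[R]_(k1 + p1) := usubmx coef_cf.
Definition rho_cf : 'cV[R]_k1 := dsubmx coef_cf.

Definition sigma2_u : R :=
  (n%:R)^-1 * sqnorm (Y2 - Xmat *m theta_cf - Vhat *m rho_cf).
Definition sigma2_ols : R := (n%:R)^-1 * sqnorm (Y2 - Xmat *m theta_ols).
Definition sigma2_2sls : R := (n%:R)^-1 * sqnorm (Y2 - Xmat *m theta_2sls).

Definition Hmid (s1 s2 : R) : 'M[R]_k1 :=
  s1 *: invmx (Y1hat^T *m annmx Z1 *m Y1hat) - s2 *: invmx (Y1^T *m annmx Z1 *m Y1).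

Definition tH (s1 s2 : R) : R := qform (beta_ols - beta_2sls) (invmx (Hmid s1 s2)).

Definition tH1 : R := tH sigma2_ols sigma2_ols.
Definition tH2 : R := tH sigma2_2sls sigma2_2sls.
Definition tH3 : R := tH sigma2_2sls sigma2_ols.

Definition tCF : R :=
  qform rho_cf (invmx (sigma2_u *: invmx (Vhat^T *m annmx Xmat *m Vhat))).

End Defs.

From mathcomp Require Import all_boot all_order all_algebra.
From mathcomp Require Import lra.
Import Order.TTheory GRing.Theory Num.Theory.
Set Implicit Arguments. Unset Strict Implicit. Unset Printing Implicit Defensive.
Local Open Scope ring_scope.

(* The three variances are residual sums of squares of least-squares problems:
   OLS minimises over the column space of X, which also contains the 2SLS fit,
   and the control-function regression minimises over the larger span of
   (X, Vhat). For the tests put A = Y1hat' M_Z1 Y1hat, B = Y1' M_Z1 Y1 and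
   E = Vhat' Vhat, so that B = A + E. By Frisch-Waugh-Lovell the
   control-function estimate of beta is the 2SLS estimate, and
   d = beta_ols - beta_2sls satisfies B d = E rho. Hence
   (A^-1 - B^-1) (A rho) = d and d' A rho = rho' Vhat' M_X Vhat rho =: q >= 0,
   so t_H(s, s) = q / s and t_CF = q / sigma_u^2, and the first two test
   inequalities follow from the ordering of the variances. The last one is the
   antitonicity of inversion in the Loewner order: H(s2, s1) exceeds H(s2, s2)
   by the psd matrix (s2 - s1) B^-1 when s1 <= s2. *)

Section QuadraticForms.
Variable R : realFieldType.

Definition psdmx k (M : 'M[R]_k) := forall x : 'cV[R]_k, 0 <= qform x M.

Lemma dotC m (u v : 'cV[R]_m) : (u^T *m v) 0 0 = (v^T *m u) 0 0.
Proof. by rewrite -[in RHS](trmxK u) -trmx_mul [RHS]mxE. Qed.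

Lemma sqnorm_ge0 m (v : 'cV[R]_m) : 0 <= sqnorm v.
Proof. by rewrite /sqnorm mxE; apply: sumr_ge0 => i _; rewrite mxE -expr2 sqr_ge0. Qed.

Lemma sqnorm_eq0 m (v : 'cV[R]_m) : sqnorm v = 0 -> v = 0.
Proof.
rewrite /sqnorm mxE => v0; apply/matrixP => i j; rewrite (ord1 j) mxE.
have sq_ge0 l : true -> 0 <= v^T 0 l * v l 0 by rewrite mxE -expr2 sqr_ge0.
have /eqP := psumr_eq0P sq_ge0 v0 (i := i) isT.
by rewrite mxE -expr2 sqrf_eq0 => /eqP.
Qed.

Lemma qformE k (v : 'cV[R]_k) M : qform v M = (v^T *m (M *m v)) 0 0.
Proof. by rewrite /qform mulmxA. Qed.

Lemma qformD k (v : 'cV[R]_k) M N : qform v (M + N) = qform v M + qform v N.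
Proof. by rewrite /qform mulmxDr mulmxDl mxE. Qed.

Lemma qformZ k (v : 'cV[R]_k) a M : qform v (a *: M) = a * qform v M.
Proof. by rewrite /qform -scalemxAr -scalemxAl mxE. Qed.

Lemma qformN k (v : 'cV[R]_k) M : qform v (- M) = - qform v M.
Proof. by rewrite -scaleN1r qformZ mulN1r. Qed.

Lemma qform_gram k m (U : 'M[R]_(k, m)) v : qform v (U^T *m U) = sqnorm (U *m v).
Proof. by rewrite /qform /sqnorm trmx_mul !mulmxA. Qed.

Lemma gram_sym k m (U : 'M[R]_(k, m)) : (U^T *m U)^T = U^T *m U.
Proof. by rewrite trmx_mul trmxK. Qed.

Lemma quadmx_add_orth n k (U V : 'M[R]_(n, k)) (M : 'M[R]_n) :
  M *m V = V -> V^T *m M = V^T -> U^T *m V = 0 ->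
  (U + V)^T *m M *m (U + V) = U^T *m M *m U + V^T *m V.
Proof.
move=> MV VM UV.
have VU : V^T *m U = 0 by rewrite -[V^T *m U]trmxK trmx_mul trmxK UV trmx0.
rewrite [(U + V)^T]raddfD /= !mulmxDl !mulmxDr VM -!mulmxA MV UV VU.
by rewrite addr0 add0r.
Qed.

Lemma psdmx_gram k m (U : 'M[R]_(k, m)) : psdmx (U^T *m U).
Proof. by move=> v; rewrite qform_gram sqnorm_ge0. Qed.

Lemma unitmx_inj k (M : 'M[R]_k) :
  (forall v : 'cV_k, M *m v = 0 -> v = 0) -> M \in unitmx.
Proof.
move=> Minj; rewrite -unitmx_tr -row_free_unit; apply: inj_row_free => v vM0.
apply: trmx_inj; rewrite trmx0; apply: Minj.
by rewrite -[M]trmxK -trmx_mul vM0 trmx0.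
Qed.

Lemma gram_unitP n m (A : 'M[R]_(n, m)) :
  reflect (forall v : 'cV_m, A *m v = 0 -> v = 0) (gram_unit A).
Proof.
apply: (iffP idP) => [Au v Av0 | Ainj].
  by rewrite -(mulKmx Au v) -mulmxA Av0 !mulmx0.
apply: unitmx_inj => v AAv0; apply: Ainj; apply: sqnorm_eq0.
by rewrite -qform_gram qformE AAv0 mulmx0 mxE.
Qed.

Lemma gram_unit_row_mx_eq0 n a b (U : 'M[R]_(n, a)) (V : 'M[R]_(n, b))
    (x : 'cV_a) (y : 'cV_b) :
  gram_unit (row_mx U V) -> U *m x + V *m y = 0 -> x = 0 /\ y = 0.
Proof.
move=> /gram_unitP UVinj; rewrite -mul_row_col => /UVinj.
by rewrite -col_mx0 => /eq_col_mx.
Qed.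

Lemma gram_unit_row_mxl n a b (U : 'M[R]_(n, a)) (V : 'M[R]_(n, b)) :
  gram_unit (row_mx U V) -> gram_unit U.
Proof.
move=> UVu; apply/gram_unitP => x Ux0.
have UV0 : U *m x + V *m (0 : 'cV_b) = 0 by rewrite Ux0 mulmx0 addr0.
by have [] := gram_unit_row_mx_eq0 UVu UV0.
Qed.

Lemma gram_unit_row_mxC n a b (U : 'M[R]_(n, a)) (V : 'M[R]_(n, b)) :
  gram_unit (row_mx U V) -> gram_unit (row_mx V U).
Proof.
move=> UVu; apply/gram_unitP => w; rewrite -[w]vsubmxK mul_row_col addrC.
by case/(gram_unit_row_mx_eq0 UVu) => -> ->; rewrite col_mx0.
Qed.

(* d' M^-1 d is the maximum of 2 d'x - x'Mx over x, attained at x = M^-1 d. *)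
Lemma qform_invmx_ge k (M : 'M[R]_k) (d x : 'cV[R]_k) :
  M^T = M -> M \in unitmx -> psdmx M ->
  2 * (d^T *m x) 0 0 - qform x M <= qform d (invmx M).
Proof.
move=> Msym Mu Mpsd; set y := invmx M *m d.
have My : M *m y = d by rewrite /y mulmxA mulmxV ?mul1mx.
have yMx : (y^T *m (M *m x)) 0 0 = (d^T *m x) 0 0.
  by rewrite [LHS]dotC trmx_mul Msym -mulmxA My dotC.
have := Mpsd (x - y).
rewrite /qform !raddfB /= !mulmxBl -trace_mx11 !raddfB /= !trace_mx11.
rewrite -!mulmxA My yMx (dotC x d) (dotC y d) /y; lra.
Qed.

Lemma qform_invmx_le k (M P : 'M[R]_k) (d : 'cV[R]_k) :
  M^T = M -> M \in unitmx -> M + P \in unitmx -> psdmx M -> psdmx P ->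
  qform d (invmx (M + P)) <= qform d (invmx M).
Proof.
move=> Msym Mu MPu Mpsd Ppsd; set x := invmx (M + P) *m d.
have MPx : (M + P) *m x = d by rewrite /x mulmxA mulmxV ?mul1mx.
have dx : qform d (invmx (M + P)) = (d^T *m x) 0 0 by rewrite qformE.
have xMPx : qform x M + qform x P = (d^T *m x) 0 0.
  by rewrite -qformD qformE MPx dotC.
have := qform_invmx_ge d x Msym Mu Mpsd; have := Ppsd x; lra.
Qed.

Lemma psdmx_invmx k (M : 'M[R]_k) :
  M^T = M -> M \in unitmx -> psdmx M -> psdmx (invmx M).
Proof.
move=> Msym Mu Mpsd d; have := qform_invmx_ge d 0 Msym Mu Mpsd.
have -> : qform 0 M = 0 by rewrite /qform mulmx0 mxE.
by rewrite mulmx0 mxE mulr0 subrr.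
Qed.

Lemma psdmx_invmxB k (M P : 'M[R]_k) :
  M^T = M -> M \in unitmx -> M + P \in unitmx -> psdmx M -> psdmx P ->
  psdmx (invmx M - invmx (M + P)).
Proof.
move=> Msym Mu MPu Mpsd Ppsd d.
by rewrite qformD qformN subr_ge0 qform_invmx_le.
Qed.

Lemma psdmxZ k (M : 'M[R]_k) a : 0 <= a -> psdmx M -> psdmx (a *: M).
Proof. by move=> a0 Mpsd x; rewrite qformZ mulr_ge0. Qed.

End QuadraticForms.

Section LeastSquares.
Variable R : realFieldType.

Definition lsq n m (X : 'M[R]_(n, m)) (y : 'cV[R]_n) : 'cV[R]_m :=
  invmx (X^T *m X) *m X^T *m y.

Lemma projmx_lsq n m (X : 'M[R]_(n, m)) y : projmx X *m y = X *m lsq X y.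
Proof. by rewrite /projmx /lsq !mulmxA. Qed.

Lemma lsq_normal n m (X : 'M[R]_(n, m)) y :
  gram_unit X -> X^T *m (y - X *m lsq X y) = 0.
Proof. by move=> Xu; rewrite mulmxBr /lsq !mulmxA mulmxV ?mul1mx ?subrr. Qed.

Lemma sqnorm_lsq_le n m (X : 'M[R]_(n, m)) y t :
  gram_unit X -> sqnorm (y - X *m lsq X y) <= sqnorm (y - X *m t).
Proof.
move=> /(lsq_normal y); set r := y - _ => Xr.
have -> : y - X *m t = r + X *m (lsq X y - t) by rewrite mulmxBr addrA subrK.
move: (lsq X y - t) => u; clearbody r.
have rXu : r^T *m (X *m u) = 0 by rewrite mulmxA -[X]trmxK -trmx_mul Xr trmx0 mul0mx.
have Xur : (X *m u)^T *m r = 0 by rewrite trmx_mul -mulmxA Xr mulmx0.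
rewrite /sqnorm !raddfD /= !mulmxDl rXu Xur addr0 add0r.
by rewrite -[X in _ <= X]trace_mx11 raddfD /= !trace_mx11 lerDl sqnorm_ge0.
Qed.

Lemma projmx_sym n m (A : 'M[R]_(n, m)) : (projmx A)^T = projmx A.
Proof. by rewrite /projmx !trmx_mul trmxK trmx_inv trmx_mul trmxK mulmxA. Qed.

Lemma annmx_sym n m (A : 'M[R]_(n, m)) : (annmx A)^T = annmx A.
Proof. by rewrite /annmx raddfB /= trmx1 projmx_sym. Qed.

Lemma projmx_add_annmx n m (A : 'M[R]_(n, m)) : projmx A + annmx A = 1%:M.
Proof. by rewrite /annmx addrC subrK. Qed.

Lemma annmx_orth n m (A : 'M[R]_(n, m)) k (v : 'M[R]_(n, k)) :
  A^T *m v = 0 -> annmx A *m v = v.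
Proof. by move=> Av; rewrite /annmx mulmxBl mul1mx /projmx -!mulmxA Av !mulmx0 subr0. Qed.

Lemma annmx_eq0 n m (A : 'M[R]_(n, m)) v : annmx A *m v = 0 -> v = A *m lsq A v.
Proof. by rewrite /annmx mulmxBl mul1mx projmx_lsq => /eqP; rewrite subr_eq0 => /eqP. Qed.

Section Projection.
Variables (n m : nat) (A : 'M[R]_(n, m)).
Hypothesis Au : gram_unit A.

Lemma projmx_mulmx k (T : 'M[R]_(m, k)) : projmx A *m (A *m T) = A *m T.
Proof. by rewrite /projmx -!mulmxA (mulmxA A^T) mulKmx. Qed.

Lemma projmx_idem : projmx A *m projmx A = projmx A.
Proof. by rewrite /projmx -!mulmxA (mulmxA A^T A) mulKmx. Qed.

Lemma projmx_annmx : projmx A *m annmx A = 0.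
Proof. by rewrite /annmx mulmxBr mulmx1 projmx_idem subrr. Qed.

Lemma annmx_mulmx k (T : 'M[R]_(m, k)) : annmx A *m (A *m T) = 0.
Proof. by rewrite /annmx mulmxBl mul1mx projmx_mulmx subrr. Qed.

Lemma annmx_idem : annmx A *m annmx A = annmx A.
Proof. by rewrite {1}/annmx mulmxBl mul1mx /annmx mulmxBr mulmx1 projmx_idem subrr subr0. Qed.

Lemma annmx_gram k (U : 'M[R]_(n, k)) :
  U^T *m annmx A *m U = (annmx A *m U)^T *m (annmx A *m U).
Proof. by rewrite trmx_mul annmx_sym -!mulmxA (mulmxA (annmx A)) annmx_idem. Qed.

End Projection.

Lemma unitmx_partial_gram n a b (U : 'M[R]_(n, a)) (Z : 'M[R]_(n, b)) :
  gram_unit (row_mx U Z) -> U^T *m annmx Z *m U \in unitmx.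
Proof.
move=> UZu; have Zu := gram_unit_row_mxl (gram_unit_row_mxC UZu).
rewrite annmx_gram //; apply/gram_unitP => x; rewrite -mulmxA => /annmx_eq0 Ux.
have UZ0 : U *m x + Z *m - lsq Z (U *m x) = 0 by rewrite mulmxN -Ux subrr.
by have [] := gram_unit_row_mx_eq0 UZu UZ0.
Qed.

Lemma frisch_waugh_lovell n a b (U : 'M[R]_(n, a)) (Z : 'M[R]_(n, b)) y
    (th : 'cV[R]_(a + b)) :
  gram_unit Z -> (row_mx U Z)^T *m (y - row_mx U Z *m th) = 0 ->
  U^T *m annmx Z *m U *m usubmx th = U^T *m annmx Z *m y.
Proof.
move=> Zu; rewrite tr_row_mx mul_col_mx -col_mx0 => /eq_col_mx [Ur Zr].
have ry : y - U *m usubmx th = (y - row_mx U Z *m th) + Z *m dsubmx th.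
  by rewrite -[X in row_mx U Z *m X]vsubmxK mul_row_col opprD addrA subrK.
apply/eqP; rewrite eq_sym -subr_eq0 -!mulmxA -!mulmxBr.
by rewrite ry mulmxDr (annmx_orth Zr) (annmx_mulmx Zu) addr0 Ur.
Qed.

Lemma projmx_row_mxl n a b (U : 'M[R]_(n, a)) (V : 'M[R]_(n, b)) :
  gram_unit (row_mx U V) -> projmx (row_mx U V) *m U = U.
Proof.
move=> UVu; have := projmx_mulmx UVu (col_mx 1%:M 0).
by rewrite mul_row_col mulmx1 mulmx0 addr0.
Qed.

Section NestedProjections.
Variables (n m p : nat) (A : 'M[R]_(n, m)) (B : 'M[R]_(n, p)).
Hypothesis BA : projmx B *m A = A.

Lemma annmx_nested_mulmx : annmx B *m A = 0.
Proof. by rewrite /annmx mulmxBl mul1mx BA subrr. Qed.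

Lemma annmx_nested : annmx A *m annmx B = annmx B.
Proof.
have PA : projmx A = A *m (invmx (A^T *m A) *m A^T) by rewrite /projmx mulmxA.
have PBPA : projmx B *m projmx A = projmx A by rewrite PA mulmxA BA.
have PAB : projmx A *m projmx B = projmx A.
  by rewrite -[LHS]trmxK trmx_mul !projmx_sym PBPA projmx_sym.
by rewrite /annmx mulmxBl mul1mx mulmxBr mulmx1 PAB subrr subr0.
Qed.

End NestedProjections.

End LeastSquares.

Section ControlFunction.
Variables (R : realFieldType) (n k1 p1 p2 : nat).
Variables (Y1 : 'M[R]_(n, k1)) (y : 'cV[R]_n) (Z1 : 'M[R]_(n, p1)) (Z2 : 'M[R]_(n, p2)).
Hypotheses (Zu : gram_unit (Zmat Z1 Z2)) (Xu : gram_unit (Xmat Y1 Z1)).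
Hypothesis XPZXu : (Xmat Y1 Z1)^T *m projmx (Zmat Z1 Z2) *m Xmat Y1 Z1 \in unitmx.
Hypothesis XVu : gram_unit (XV Y1 Z1 Z2).

Local Notation Z := (Zmat Z1 Z2).
Local Notation X := (Xmat Y1 Z1).
Local Notation V := (Vhat Y1 Z1 Z2).
Local Notation Yh := (Y1hat Y1 Z1 Z2).
Local Notation PZ := (projmx Z).
Local Notation MZ := (annmx Z).
Local Notation W := (annmx Z1).
Local Notation A := (Yh^T *m W *m Yh).
Local Notation B := (Y1^T *m W *m Y1).
Local Notation E := (V^T *m V).
Local Notation G := (V^T *m annmx X *m V).
Local Notation bo := (beta_ols Y1 y Z1).
Local Notation b2 := (beta_2sls Y1 y Z1 Z2).
Local Notation rho := (rho_cf Y1 y Z1 Z2).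
Local Notation d := (bo - b2).

Lemma Z1_gram_unit : gram_unit Z1.
Proof. exact: gram_unit_row_mxl Zu. Qed.

Lemma PZ_X : PZ *m X = row_mx Yh Z1.
Proof. by rewrite /Xmat mul_mx_row projmx_row_mxl. Qed.

Lemma gram_PZ_X : (PZ *m X)^T *m (PZ *m X) = X^T *m PZ *m X.
Proof. by rewrite trmx_mul projmx_sym -[LHS]mulmxA (mulmxA PZ) projmx_idem // mulmxA. Qed.

Lemma Yh_Z1_gram_unit : gram_unit (row_mx Yh Z1).
Proof. by rewrite /gram_unit -PZ_X gram_PZ_X. Qed.

Lemma theta_2sls_lsq : theta_2sls Y1 y Z1 Z2 = lsq (row_mx Yh Z1) y.
Proof. by rewrite -PZ_X /lsq gram_PZ_X trmx_mul projmx_sym mulmxA. Qed.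

Lemma W_V : W *m V = V.
Proof. by rewrite /Vhat mulmxA annmx_nested // projmx_row_mxl. Qed.

Lemma V_W : V^T *m W = V^T.
Proof. by rewrite -[W]annmx_sym -trmx_mul W_V. Qed.

Lemma Z1_V : Z1^T *m V = 0.
Proof.
rewrite /Vhat mulmxA -[MZ]annmx_sym -trmx_mul annmx_nested_mulmx ?projmx_row_mxl //.
by rewrite trmx0 mul0mx.
Qed.

Lemma V_Z1 : V^T *m Z1 = 0.
Proof. by rewrite -[LHS]trmxK trmx_mul trmxK Z1_V trmx0. Qed.

Lemma Yh_V : Yh^T *m V = 0.
Proof.
rewrite /Y1hat /Vhat trmx_mul projmx_sym -mulmxA (mulmxA PZ) projmx_annmx //.
by rewrite mul0mx mulmx0.
Qed.

Lemma Y1_split : Y1 = Yh + V.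
Proof. by rewrite /Y1hat /Vhat -mulmxDl projmx_add_annmx mul1mx. Qed.

Lemma Y1_V : Y1^T *m V = E.
Proof. by rewrite /Vhat mulmxA (annmx_gram Zu). Qed.

Lemma V_Y1 : V^T *m Y1 = E.
Proof. by rewrite -[LHS]trmxK trmx_mul trmxK Y1_V gram_sym. Qed.

Lemma B_split : B = A + E.
Proof.
have -> : B = (Yh + V)^T *m W *m (Yh + V) by rewrite -Y1_split.
exact: quadmx_add_orth W_V V_W Yh_V.
Qed.

Lemma A_split : A = B - E.
Proof. by rewrite B_split addrK. Qed.

Lemma A_sym : A^T = A.
Proof. by rewrite (annmx_gram Z1_gram_unit) gram_sym. Qed.

Lemma B_sym : B^T = B.
Proof. by rewrite (annmx_gram Z1_gram_unit) gram_sym. Qed.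

Lemma A_psd : psdmx A.
Proof. by rewrite (annmx_gram Z1_gram_unit); apply: psdmx_gram. Qed.

Lemma B_psd : psdmx B.
Proof. by rewrite (annmx_gram Z1_gram_unit); apply: psdmx_gram. Qed.

Lemma A_unit : A \in unitmx.
Proof. exact: unitmx_partial_gram Yh_Z1_gram_unit. Qed.

Lemma B_unit : B \in unitmx.
Proof. exact: unitmx_partial_gram Xu. Qed.

Lemma B_beta_ols : B *m bo = Y1^T *m W *m y.
Proof. exact: frisch_waugh_lovell Z1_gram_unit (lsq_normal y Xu). Qed.

Lemma A_beta_2sls : A *m b2 = Yh^T *m W *m y.
Proof.
rewrite /beta_2sls theta_2sls_lsq.
exact: frisch_waugh_lovell Z1_gram_unit (lsq_normal y Yh_Z1_gram_unit).
Qed.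

Lemma cf_normal_eqs :
  B *m usubmx (theta_cf Y1 y Z1 Z2) = Y1^T *m W *m y - E *m rho /\
  E *m usubmx (theta_cf Y1 y Z1 Z2) + E *m rho = V^T *m y.
Proof.
have := lsq_normal y XVu; rewrite -/(coef_cf Y1 y Z1 Z2).
rewrite {1}/XV tr_row_mx mul_col_mx -col_mx0 => /eq_col_mx [Xr Vr].
have r_eq : y - XV Y1 Z1 Z2 *m coef_cf Y1 y Z1 Z2 =
    (y - V *m rho) - X *m theta_cf Y1 y Z1 Z2.
  by rewrite /XV -[coef_cf _ _ _ _]vsubmxK mul_row_col opprD addrA addrAC.
rewrite r_eq in Xr Vr; split.
  rewrite (frisch_waugh_lovell Z1_gram_unit Xr) mulmxBr (mulmxA (Y1^T *m W)).
  by rewrite -(mulmxA Y1^T) W_V Y1_V.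
have XE : X *m theta_cf Y1 y Z1 Z2 =
    Y1 *m usubmx (theta_cf Y1 y Z1 Z2) + Z1 *m dsubmx (theta_cf Y1 y Z1 Z2).
  by rewrite /Xmat -{1}[theta_cf _ _ _ _]vsubmxK mul_row_col.
rewrite XE !mulmxBr mulmxDr (mulmxA V^T Y1) V_Y1 (mulmxA V^T Z1) V_Z1 in Vr.
move/eqP: Vr; rewrite mul0mx addr0 (mulmxA V^T V) subr_eq0 => /eqP <-.
by rewrite subrK.
Qed.

Lemma Yh_W_y : Yh^T *m W *m y = Y1^T *m W *m y - V^T *m y.
Proof.
have -> : Yh = Y1 - V by apply/eqP; rewrite eq_sym subr_eq -Y1_split.
by rewrite [(Y1 - V)^T]raddfB /= !mulmxBl V_W.
Qed.

Lemma beta_cf_2sls : usubmx (theta_cf Y1 y Z1 Z2) = b2.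
Proof.
have [Bcf Ecf] := cf_normal_eqs.
apply: (can_inj (mulKmx A_unit)); rewrite A_beta_2sls Yh_W_y A_split mulmxBl Bcf -Ecf.
by rewrite opprD addrA [LHS]addrAC.
Qed.

Lemma B_d : B *m d = E *m rho.
Proof.
rewrite mulmxBr B_beta_ols -beta_cf_2sls cf_normal_eqs.1.
by rewrite opprB addrC subrK.
Qed.

Lemma lsq_X_Vrho : usubmx (lsq X (V *m rho)) = d.
Proof.
apply: (can_inj (mulKmx B_unit)); rewrite B_d.
rewrite (frisch_waugh_lovell Z1_gram_unit (lsq_normal (V *m rho) Xu)).
by rewrite (mulmxA (Y1^T *m W)) -(mulmxA Y1^T) W_V Y1_V.
Qed.

Lemma X_Vrho : X^T *m (V *m rho) = col_mx (E *m rho) 0.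
Proof.
by rewrite /Xmat tr_row_mx mul_col_mx (mulmxA Y1^T) Y1_V (mulmxA Z1^T) Z1_V mul0mx.
Qed.

Lemma qform_G : qform rho G = qform rho E - ((E *m rho)^T *m d) 0 0.
Proof.
rewrite /annmx mulmxBr mulmx1 mulmxBl qformD qformN; congr (_ - _).
have wE : lsq X (V *m rho) = col_mx d (dsubmx (lsq X (V *m rho))).
  by rewrite -lsq_X_Vrho vsubmxK.
have VX : (V *m rho)^T *m X = (col_mx (E *m rho) 0)^T.
  by rewrite -X_Vrho [RHS]trmx_mul trmxK.
rewrite qformE -(mulmxA (V^T *m projmx X) V) -(mulmxA V^T) projmx_lsq wE.
rewrite (mulmxA V^T) (mulmxA rho^T).
by rewrite (mulmxA rho^T V^T) -trmx_mul VX tr_col_mx mul_row_col trmx0 mul0mx addr0.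
Qed.

Local Notation C := (invmx A - invmx B).

Lemma C_mul_A_rho : C *m (A *m rho) = d.
Proof.
rewrite mulmxBl (mulKmx A_unit) A_split mulmxBl mulmxBr (mulKmx B_unit).
rewrite -B_d (mulKmx B_unit).
by rewrite opprB addrC subrK.
Qed.

Lemma d_A_rho : (d^T *m (A *m rho)) 0 0 = qform rho G.
Proof.
rewrite qform_G A_split mulmxBl mulmxBr -[LHS]trace_mx11 raddfB /= !trace_mx11.
rewrite (dotC d (E *m rho)) (dotC d (B *m rho)) qformE; congr (_ - _).
by rewrite trmx_mul B_sym -(mulmxA rho^T) B_d.
Qed.

Lemma qform_G_ge0 : 0 <= qform rho G.
Proof. by rewrite (annmx_gram Xu); apply: psdmx_gram. Qed.

Lemma G_unit : G \in unitmx.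
Proof. exact: unitmx_partial_gram (gram_unit_row_mxC XVu). Qed.

Lemma Hmid_sym s1 s2 : (Hmid Y1 Z1 Z2 s1 s2)^T = Hmid Y1 Z1 Z2 s1 s2.
Proof. by rewrite /Hmid raddfB /= !linearZ /= !trmx_inv A_sym B_sym. Qed.

Lemma tH_diagE s : 0 < s -> Hmid Y1 Z1 Z2 s s \in unitmx ->
  tH Y1 y Z1 Z2 s s = s^-1 * qform rho G.
Proof.
move=> s_gt0 Hu; have su : s \is a GRing.unit by rewrite unitfE gt_eqF.
have HC : Hmid Y1 Z1 Z2 s s = s *: C by rewrite /Hmid scalerBr.
have Cu : C \in unitmx by rewrite -(unitmxZ _ su) -HC.
have invCd : invmx C *m d = A *m rho by rewrite -C_mul_A_rho mulKmx.
by rewrite /tH HC invmxZ -?HC // qformZ qformE invCd d_A_rho.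
Qed.

Lemma tCFE : 0 < sigma2_u Y1 y Z1 Z2 ->
  tCF Y1 y Z1 Z2 = (sigma2_u Y1 y Z1 Z2)^-1 * qform rho G.
Proof.
move=> su_gt0.
have su : sigma2_u Y1 y Z1 Z2 \is a GRing.unit by rewrite unitfE gt_eqF.
by rewrite /tCF invmxZ ?invmxK ?qformZ // unitmxZ // unitmx_inv G_unit.
Qed.

Lemma tH_le_diag s2 s1 : 0 < s1 -> s1 <= s2 ->
  Hmid Y1 Z1 Z2 s2 s2 \in unitmx -> Hmid Y1 Z1 Z2 s2 s1 \in unitmx ->
  tH Y1 y Z1 Z2 s2 s1 <= tH Y1 y Z1 Z2 s2 s2.
Proof.
move=> s1_gt0 s12 H22u H21u.
have HE : Hmid Y1 Z1 Z2 s2 s2 + (s2 - s1) *: invmx B = Hmid Y1 Z1 Z2 s2 s1.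
  by rewrite /Hmid scalerBl addrA subrK.
have AEu : A + E \in unitmx by rewrite -B_split B_unit.
rewrite /tH -HE; apply: qform_invmx_le; rewrite ?HE ?Hmid_sym //.
  rewrite /Hmid -scalerBr B_split.
  apply: psdmxZ; first exact: le_trans (ltW s1_gt0) s12.
  exact: psdmx_invmxB A_sym A_unit AEu A_psd (psdmx_gram V).
apply: psdmxZ; first by rewrite subr_ge0.
exact: psdmx_invmx B_sym B_unit B_psd.
Qed.

Lemma sigma2_ols_le_2sls : sigma2_ols Y1 y Z1 <= sigma2_2sls Y1 y Z1 Z2.
Proof. by rewrite ler_wpM2l ?invr_ge0 ?ler0n // sqnorm_lsq_le. Qed.

Lemma sigma2_u_le_ols : sigma2_u Y1 y Z1 Z2 <= sigma2_ols Y1 y Z1.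
Proof.
rewrite ler_wpM2l ?invr_ge0 ?ler0n //.
have -> : y - X *m theta_cf Y1 y Z1 Z2 - V *m rho =
    y - XV Y1 Z1 Z2 *m coef_cf Y1 y Z1 Z2.
  by rewrite /XV -[coef_cf _ _ _ _]vsubmxK mul_row_col opprD addrA.
have -> : y - X *m theta_ols Y1 y Z1 =
    y - XV Y1 Z1 Z2 *m col_mx (theta_ols Y1 y Z1) 0.
  by rewrite /XV mul_row_col mulmx0 addr0.
exact: sqnorm_lsq_le XVu.
Qed.

End ControlFunction.

Theorem mainTheorem4 (R : realFieldType) (n k1 p1 p2 : nat)
  (Y1 : 'M[R]_(n, k1)) (Y2 : 'cV[R]_n) (Z1 : 'M[R]_(n, p1)) (Z2 : 'M[R]_(n, p2))
  (hZ : gram_unit (Zmat Z1 Z2))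
  (hX : gram_unit (Xmat Y1 Z1))
  (hXPZX : (Xmat Y1 Z1)^T *m projmx (Zmat Z1 Z2) *m Xmat Y1 Z1 \in unitmx)
  (hXV : gram_unit (XV Y1 Z1 Z2))
  (hsu : 0 < sigma2_u Y1 Y2 Z1 Z2)
  (hsols : 0 < sigma2_ols Y1 Y2 Z1)
  (hs2sls : 0 < sigma2_2sls Y1 Y2 Z1 Z2)
  (hH1 : Hmid Y1 Z1 Z2 (sigma2_ols Y1 Y2 Z1) (sigma2_ols Y1 Y2 Z1) \in unitmx)
  (hH2 : Hmid Y1 Z1 Z2 (sigma2_2sls Y1 Y2 Z1 Z2) (sigma2_2sls Y1 Y2 Z1 Z2) \in unitmx)
  (hH3 : Hmid Y1 Z1 Z2 (sigma2_2sls Y1 Y2 Z1 Z2) (sigma2_ols Y1 Y2 Z1) \in unitmx) :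
  sigma2_ols Y1 Y2 Z1 <= sigma2_2sls Y1 Y2 Z1 Z2 /\
  sigma2_u Y1 Y2 Z1 Z2 <= sigma2_ols Y1 Y2 Z1 /\
  tH1 Y1 Y2 Z1 Z2 <= tCF Y1 Y2 Z1 Z2 /\
  tH2 Y1 Y2 Z1 Z2 <= tH1 Y1 Y2 Z1 Z2 /\
  tH3 Y1 Y2 Z1 Z2 <= tH2 Y1 Y2 Z1 Z2.
Proof.
have s_ols_2sls := sigma2_ols_le_2sls Y2 Z2 hX.
have s_u_ols := sigma2_u_le_ols Y2 hXV.
have q_ge0 := qform_G_ge0 Y2 Z2 hX.
have tH32 := tH_le_diag Y2 hZ hX hXPZX hsols s_ols_2sls hH2 hH3.
rewrite /tH1 /tH2 /tH3 (tH_diagE Y2 hZ hX hXPZX hXV hsols hH1).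
rewrite (tH_diagE Y2 hZ hX hXPZX hXV hs2sls hH2) (tCFE hXV hsu) in tH32 *.
do !split => //; rewrite ler_wpM2r // lef_pV2 ?posrE //.
Qed.
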